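(* For a nonnegative integer $t$, we have that $$\mathrm{HC}_1(H_t) = \Theta\left( \left(\frac{(k-1)^3 + 3(k-1)}{k^2 + 1}\right)^t \right).$$
   Context: Fix an integer $k\ge 2$ and a $k$-uniform hypergraph $H_0$. The Iterated Local Transitivity Hypergraph (ILTH) model forms $H_{t+1}$ from $H_t$ as follows: for each vertex $x\in V(H_t)$ add a new vertex $x'$ (the clone of $x$), and for every hyperedge $e$ of $H_t$ and every $x\in e$ add the hyperedge $e-x+x' = (e\setminus\{x\})\cup\{x'\}$; all hyperedges of $H_t$ are kept. A path of length two in a hypergraph is a 5-tuple $(u,e_1,v,e_2,w)$ where $u,v,w$ are distinct vertices, $e_1,e_2$ are distinct hyperedges, $u,v\in e_1$ and $v,w\in e_2$. A hypertriangle is a 6-tuple $(u,e_1,v,e_2,w,e_3)$ with $u,v,w$ distinct vertices, $e_1,e_2,e_3$ distinct hyperedges, and $u,v\in e_1$, $v,w\in e_2$, $w,u\in e_3$. The clustering coefficient is $\mathrm{HC}_1(H) = \frac{6\times(\text{number of hypertriangles in } H)}{\text{number of paths of length two in } H}$. The constants in $\Theta$ depend on $k$ and $H_0$. *)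

From mathcomp Require Import all_boot all_order all_algebra.
From mathcomp Require Import finmap.
Set Implicit Arguments. Unset Strict Implicit. Unset Printing Implicit Defensive.
Import Order.TTheory GRing.Theory Num.Theory.
Local Open Scope fset_scope.

(* A hypergraph: vertex set {0, ..., nv-1} and a finite set of hyperedges,
   each hyperedge being a finite set of vertices. *)
Record hgraph := HGraph { nv : nat; edges : {fset {fset nat}} }.

Definition uniform (k : nat) (H : hgraph) : Prop :=
  forall e, e \in edges H -> #|` e| = k /\ (forall x, x \in e -> (x < nv H)%N).

(* One ILTH step: the clone of vertex x is x + nv H (a fresh vertex);
   for each hyperedge e and x in e add e - x + x'; keep the old hyperedges. *)
Definition clone_edges (H : hgraph) : seq {fset nat} :=
  [seq (e `\ x) `|` [fset (x + nv H)%N] | e <- enum_fset (edges H), x <- enum_fset e].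

Definition ilth_step (H : hgraph) : hgraph :=
  HGraph (nv H + nv H) (edges H `|` [fset e in clone_edges H]).

Definition ilth (H0 : hgraph) (t : nat) : hgraph := iter t ilth_step H0.

Definition verts (H : hgraph) : seq nat := iota 0 (nv H).
Definition hedges (H : hgraph) : seq {fset nat} := enum_fset (edges H).

Definition npaths2 (H : hgraph) : nat :=
  \sum_(u <- verts H) \sum_(e1 <- hedges H) \sum_(v <- verts H)
   \sum_(e2 <- hedges H) \sum_(w <- verts H)
    nat_of_bool [&& uniq [:: u; v; w], e1 != e2,
                    (u \in e1) && (v \in e1) & (v \in e2) && (w \in e2)].

Definition ntriangles (H : hgraph) : nat :=
  \sum_(u <- verts H) \sum_(e1 <- hedges H) \sum_(v <- verts H)
   \sum_(e2 <- hedges H) \sum_(w <- verts H) \sum_(e3 <- hedges H)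
    nat_of_bool [&& uniq [:: u; v; w], uniq [:: e1; e2; e3],
                    (u \in e1) && (v \in e1), (v \in e2) && (w \in e2)
                  & (w \in e3) && (u \in e3)].

Definition HC1 (H : hgraph) : rat :=
  ((6 * ntriangles H)%:R / (npaths2 H)%:R)%R.

From mathcomp Require Import all_boot all_order all_algebra.
From mathcomp Require Import finmap.
From mathcomp Require Import zify ring.
Set Implicit Arguments. Unset Strict Implicit. Unset Printing Implicit Defensive.
Import Order.TTheory GRing.Theory Num.Theory.

(* A step of the ILTH model is a "lift" of an incidence relation: the vertices
   above x are x and its clone x', and the edges above f are f and the edges
   f - z + z' for z in f.  For distinct x, y in f, the number of edges above f
   containing a given vertex above x and a given vertex above y is an entry of
   M = [[k-1, 1], [1, 0]] (index 0 for the original vertex, 1 for the clone).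
   Hence above each hypertriangle lie exactly tr M^3 = (k-1)^3 + 3(k-1)
   hypertriangles, and above each path of length two exactly 1^T M^2 1 = k^2 + 1
   paths.  The lifted triangles and paths above degenerate configurations (with a
   repeated edge, or a path returning to its start) are bounded by a constant
   times the number of digons, i.e. of pairs of vertices lying in two (possibly
   equal) common edges, and digons grow at most by the factor (k-1)^2 + 2, which
   is smaller than both rates.  A potential argument then shows that the numbers
   of triangles and of paths are Theta of the t-th powers of their rates. *)

Lemma leq_bool_impl (a b : bool) : (a -> b) -> a <= b.
Proof. by case: a; case: b => // /(_ isT). Qed.

Lemma sum_nat_of_bool (T : Type) (s : seq T) (P : pred T) :
  \sum_(i <- s) P i = count P s.
Proof. by rewrite -sum1_count [RHS]big_mkcond. Qed.

Lemma sum_nat_const_seq (T : Type) (s : seq T) (c : nat) :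
  \sum_(i <- s) c = size s * c.
Proof. by rewrite big_const_seq count_predT iter_addn_0 mulnC. Qed.

Lemma leq_sum_seq (T : eqType) (s : seq T) (F G : T -> nat) :
  {in s, forall i, F i <= G i} -> \sum_(i <- s) F i <= \sum_(i <- s) G i.
Proof. by move=> FG; rewrite big_seq [leqRHS]big_seq leq_sum. Qed.

Lemma leq_sum_term (T : eqType) (s : seq T) (a : T) (F : T -> nat) :
  a \in s -> F a <= \sum_(i <- s) F i.
Proof.
elim: s => [|b s IHs] //; rewrite inE big_cons => /orP [/eqP <-|as_].
  exact: leq_addr.
exact: leq_trans (IHs as_) (leq_addl _ _).
Qed.

Lemma sum_eq_mul_le (T : eqType) (s : seq T) (a : T) (c : nat) :
  uniq s -> \sum_(i <- s) (i == a) * c <= c.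
Proof.
move=> s_uniq; rewrite -big_distrl /= -[leqRHS]mul1n leq_mul2r sum_nat_of_bool.
by rewrite (eq_count (a2 := pred1 a)) // count_uniq_mem // leq_b1 orbT.
Qed.

Lemma sum_mem_le (T : eqType) (s t : seq T) :
  uniq s -> \sum_(y <- s) (y \in t) <= size t.
Proof.
move=> s_uniq; rewrite sum_nat_of_bool -size_filter uniq_leq_size ?filter_uniq //.
by move=> y; rewrite mem_filter => /andP [].
Qed.

Lemma exchange_big21 (A B C : Type) (ra : seq A) (rb : A -> seq B) (rc : seq C)
    (F : A -> B -> C -> nat) :
  \sum_(a <- ra) \sum_(b <- rb a) \sum_(c <- rc) F a b c =
  \sum_(c <- rc) \sum_(a <- ra) \sum_(b <- rb a) F a b c.
Proof. by under eq_bigr => a _ do rewrite exchange_big; rewrite exchange_big. Qed.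

Lemma exchange_big22 (A B C D : Type) (ra : seq A) (rb : A -> seq B)
    (rc : seq C) (rd : C -> seq D) (F : A -> B -> C -> D -> nat) :
  \sum_(a <- ra) \sum_(b <- rb a) \sum_(c <- rc) \sum_(d <- rd c) F a b c d =
  \sum_(c <- rc) \sum_(d <- rd c) \sum_(a <- ra) \sum_(b <- rb a) F a b c d.
Proof.
rewrite exchange_big21; apply: eq_bigr => c _.
by under eq_bigr => a _ do rewrite exchange_big; rewrite exchange_big.
Qed.

Lemma sum_mul_cycle3 (B D : Type) (rb : seq B) (r1 r2 r3 : seq D)
    (g1 g2 g3 : B -> B -> D -> nat) :
  \sum_(b1 <- rb) \sum_(o1 <- r1) \sum_(b2 <- rb) \sum_(o2 <- r2)
  \sum_(b3 <- rb) \sum_(o3 <- r3) g1 b1 b2 o1 * g2 b2 b3 o2 * g3 b3 b1 o3 =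
  \sum_(b1 <- rb) \sum_(b2 <- rb) \sum_(b3 <- rb)
    (\sum_(o1 <- r1) g1 b1 b2 o1) * (\sum_(o2 <- r2) g2 b2 b3 o2) *
    (\sum_(o3 <- r3) g3 b3 b1 o3).
Proof.
apply: eq_bigr => b1 _; rewrite exchange_big; apply: eq_bigr => b2 _.
rewrite exchange_big21; apply: eq_bigr => b3 _.
rewrite big_distrlr big_distrl; apply: eq_bigr => o1 _.
by rewrite big_distrl; apply: eq_bigr => o2 _; rewrite big_distrr.
Qed.

Lemma sum_mul_chain2 (B D : Type) (rb : seq B) (r1 r2 : seq D)
    (g1 g2 : B -> B -> D -> nat) :
  \sum_(b1 <- rb) \sum_(o1 <- r1) \sum_(b2 <- rb) \sum_(o2 <- r2)
  \sum_(b3 <- rb) g1 b1 b2 o1 * g2 b2 b3 o2 =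
  \sum_(b1 <- rb) \sum_(b2 <- rb) \sum_(b3 <- rb)
    (\sum_(o1 <- r1) g1 b1 b2 o1) * (\sum_(o2 <- r2) g2 b2 b3 o2).
Proof.
apply: eq_bigr => b1 _; rewrite exchange_big; apply: eq_bigr => b2 _.
rewrite exchange_big21; apply: eq_bigr => b3 _.
by rewrite big_distrlr.
Qed.

Lemma sum_mul_pair (B D : Type) (rb : seq B) (r1 r2 : seq D)
    (g1 g2 : B -> B -> D -> nat) :
  \sum_(b1 <- rb) \sum_(o1 <- r1) \sum_(b2 <- rb) \sum_(o2 <- r2)
    g1 b1 b2 o1 * g2 b1 b2 o2 =
  \sum_(b1 <- rb) \sum_(b2 <- rb)
    (\sum_(o1 <- r1) g1 b1 b2 o1) * (\sum_(o2 <- r2) g2 b1 b2 o2).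
Proof.
apply: eq_bigr => b1 _; rewrite exchange_big; apply: eq_bigr => b2 _.
by rewrite big_distrlr.
Qed.

Lemma uniq3P (T : eqType) (x y z : T) :
  uniq [:: x; y; z] = [&& x != y, x != z & y != z].
Proof. by rewrite /= !inE !negb_or andbT andbA. Qed.

Section TupleSums.
Variables (V E : eqType) (vs : seq V) (es : seq E).

Definition sum_ve2 (F : V -> E -> V -> E -> nat) : nat :=
  \sum_(u <- vs) \sum_(e1 <- es) \sum_(v <- vs) \sum_(e2 <- es) F u e1 v e2.

Definition sum_ve2v (F : V -> E -> V -> E -> V -> nat) : nat :=
  \sum_(u <- vs) \sum_(e1 <- es) \sum_(v <- vs) \sum_(e2 <- es) \sum_(w <- vs)
    F u e1 v e2 w.

Definition sum_ve3 (F : V -> E -> V -> E -> V -> E -> nat) : nat :=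
  \sum_(u <- vs) \sum_(e1 <- es) \sum_(v <- vs) \sum_(e2 <- es) \sum_(w <- vs)
    \sum_(e3 <- es) F u e1 v e2 w e3.

Lemma leq_sum_ve2 F G :
  (forall u e1 v e2, e1 \in es -> e2 \in es -> F u e1 v e2 <= G u e1 v e2) ->
  sum_ve2 F <= sum_ve2 G.
Proof.
move=> FG; apply: leq_sum => u _; apply: leq_sum_seq => e1 e1_es.
by apply: leq_sum => v _; apply: leq_sum_seq => e2 e2_es; apply: FG.
Qed.

Lemma leq_sum_ve2v F G :
  (forall u e1 v e2 w, e1 \in es -> e2 \in es -> F u e1 v e2 w <= G u e1 v e2 w) ->
  sum_ve2v F <= sum_ve2v G.
Proof.
move=> FG; apply: leq_sum => u _; apply: leq_sum_seq => e1 e1_es.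
apply: leq_sum => v _; apply: leq_sum_seq => e2 e2_es.
by apply: leq_sum => w _; apply: FG.
Qed.

Lemma leq_sum_ve3 F G :
  (forall u e1 v e2 w e3, e1 \in es -> e2 \in es -> e3 \in es ->
     F u e1 v e2 w e3 <= G u e1 v e2 w e3) ->
  sum_ve3 F <= sum_ve3 G.
Proof.
move=> FG; apply: leq_sum => u _; apply: leq_sum_seq => e1 e1_es.
apply: leq_sum => v _; apply: leq_sum_seq => e2 e2_es.
by apply: leq_sum => w _; apply: leq_sum_seq => e3 e3_es; apply: FG.
Qed.

Lemma sum_ve2Ml c F : sum_ve2 (fun u e1 v e2 => c * F u e1 v e2) = c * sum_ve2 F.
Proof.
rewrite /sum_ve2 big_distrr; apply: eq_bigr => u _; rewrite big_distrr.
apply: eq_bigr => e1 _; rewrite big_distrr; apply: eq_bigr => v _.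
by rewrite big_distrr.
Qed.

Lemma sum_ve2vMl c F :
  sum_ve2v (fun u e1 v e2 w => c * F u e1 v e2 w) = c * sum_ve2v F.
Proof.
rewrite /sum_ve2v big_distrr; apply: eq_bigr => u _; rewrite big_distrr.
apply: eq_bigr => e1 _; rewrite big_distrr; apply: eq_bigr => v _.
by rewrite big_distrr; apply: eq_bigr => e2 _; rewrite big_distrr.
Qed.

Lemma sum_ve3Ml c F :
  sum_ve3 (fun u e1 v e2 w e3 => c * F u e1 v e2 w e3) = c * sum_ve3 F.
Proof.
rewrite /sum_ve3 big_distrr; apply: eq_bigr => u _; rewrite big_distrr.
apply: eq_bigr => e1 _; rewrite big_distrr; apply: eq_bigr => v _.
rewrite big_distrr; apply: eq_bigr => e2 _; rewrite big_distrr.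
by apply: eq_bigr => w _; rewrite big_distrr.
Qed.

Lemma sum_ve2vD F G :
  sum_ve2v (fun u e1 v e2 w => F u e1 v e2 w + G u e1 v e2 w) = sum_ve2v F + sum_ve2v G.
Proof.
rewrite /sum_ve2v -big_split; apply: eq_bigr => u _; rewrite -big_split.
apply: eq_bigr => e1 _; rewrite -big_split; apply: eq_bigr => v _.
by rewrite -big_split; apply: eq_bigr => e2 _; rewrite -big_split.
Qed.

Lemma sum_ve3D F G :
  sum_ve3 (fun u e1 v e2 w e3 => F u e1 v e2 w e3 + G u e1 v e2 w e3) =
  sum_ve3 F + sum_ve3 G.
Proof.
rewrite /sum_ve3 -big_split; apply: eq_bigr => u _; rewrite -big_split.
apply: eq_bigr => e1 _; rewrite -big_split; apply: eq_bigr => v _.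
rewrite -big_split; apply: eq_bigr => e2 _; rewrite -big_split.
by apply: eq_bigr => w _; rewrite -big_split.
Qed.

Lemma sum_ve3_rot F :
  sum_ve3 (fun u e1 v e2 w e3 => F v e2 w e3 u e1) = sum_ve3 F.
Proof.
rewrite /sum_ve3 exchange_big22 /=; apply: eq_bigr => v _; apply: eq_bigr => e2 _.
exact: exchange_big22.
Qed.

End TupleSums.

(** * Triangles, paths and digons of an incidence relation *)

Section Counts.
Variables (V E : eqType) (mem : V -> E -> bool).

Definition is_tri u e1 v e2 w e3 : bool :=
  [&& uniq [:: u; v; w], uniq [:: e1; e2; e3],
      mem u e1 && mem v e1, mem v e2 && mem w e2 & mem w e3 && mem u e3].

Definition is_path2 u e1 v e2 w : bool :=
  [&& uniq [:: u; v; w], e1 != e2, mem u e1 && mem v e1 & mem v e2 && mem w e2].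

Definition is_digon u e1 v e2 : bool :=
  [&& u != v, mem u e1 && mem v e1 & mem u e2 && mem v e2].

Definition ntri_of (vs : seq V) (es : seq E) : nat := sum_ve3 vs es is_tri.
Definition npaths2_of (vs : seq V) (es : seq E) : nat := sum_ve2v vs es is_path2.
Definition ndigons_of (vs : seq V) (es : seq E) : nat := sum_ve2 vs es is_digon.

Lemma ntri_of_gt0 vs es u e1 v e2 w e3 :
  u \in vs -> e1 \in es -> v \in vs -> e2 \in es -> w \in vs -> e3 \in es ->
  is_tri u e1 v e2 w e3 -> 0 < ntri_of vs es.
Proof.
move=> u_vs e1_es v_vs e2_es w_vs e3_es tri_uvw.
apply: leq_trans (leq_sum_term _ u_vs); apply: leq_trans (leq_sum_term _ e1_es).
apply: leq_trans (leq_sum_term _ v_vs); apply: leq_trans (leq_sum_term _ e2_es).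
apply: leq_trans (leq_sum_term _ w_vs); apply: leq_trans (leq_sum_term _ e3_es).
by rewrite tri_uvw.
Qed.

Lemma npaths2_of_gt0 vs es u e1 v e2 w :
  u \in vs -> e1 \in es -> v \in vs -> e2 \in es -> w \in vs ->
  is_path2 u e1 v e2 w -> 0 < npaths2_of vs es.
Proof.
move=> u_vs e1_es v_vs e2_es w_vs path_uvw.
apply: leq_trans (leq_sum_term _ u_vs); apply: leq_trans (leq_sum_term _ e1_es).
apply: leq_trans (leq_sum_term _ v_vs); apply: leq_trans (leq_sum_term _ e2_es).
apply: leq_trans (leq_sum_term _ w_vs).
by rewrite path_uvw.
Qed.

End Counts.

Definition ndigons (H : hgraph) : nat :=
  ndigons_of (fun x (e : {fset nat}) => x \in e) (verts H) (hedges H).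

Lemma ntrianglesE (H : hgraph) :
  ntriangles H = ntri_of (fun x (e : {fset nat}) => x \in e) (verts H) (hedges H).
Proof. by []. Qed.

Lemma npaths2E (H : hgraph) :
  npaths2 H = npaths2_of (fun x (e : {fset nat}) => x \in e) (verts H) (hedges H).
Proof. by []. Qed.

Lemma uniq3_map_in (T U : eqType) (f : T -> U) (s : seq T) (a b c : T) :
  {in s &, injective f} -> a \in s -> b \in s -> c \in s ->
  uniq [:: f a; f b; f c] = uniq [:: a; b; c].
Proof. by move=> f_inj a_s b_s c_s; rewrite !uniq3P !(inj_in_eq f_inj). Qed.

Section Transport.
Variables (V E V' E' : eqType) (mem : V -> E -> bool) (mem' : V' -> E' -> bool).
Variables (vs : seq V) (es : seq E) (vs' : seq V') (es' : seq E').
Variables (phi : V -> V') (psi : E -> E').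
Hypotheses (perm_vs : perm_eq vs' (map phi vs)) (perm_es : perm_eq es' (map psi es)).
Hypotheses (phi_inj : {in vs &, injective phi}) (psi_inj : {in es &, injective psi}).
Hypothesis mem_transport : {in vs & es, forall u e, mem' (phi u) (psi e) = mem u e}.

Lemma ntri_of_transport : ntri_of mem' vs' es' = ntri_of mem vs es.
Proof.
rewrite /ntri_of /sum_ve3 (perm_big _ perm_vs) big_map; apply: eq_big_seq => u u_vs.
rewrite (perm_big _ perm_es) big_map; apply: eq_big_seq => e1 e1_es.
rewrite (perm_big _ perm_vs) big_map; apply: eq_big_seq => v v_vs.
rewrite (perm_big _ perm_es) big_map; apply: eq_big_seq => e2 e2_es.
rewrite (perm_big _ perm_vs) big_map; apply: eq_big_seq => w w_vs.
rewrite (perm_big _ perm_es) big_map; apply: eq_big_seq => e3 e3_es.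
by rewrite /is_tri !mem_transport // (uniq3_map_in phi_inj) // (uniq3_map_in psi_inj).
Qed.

Lemma npaths2_of_transport : npaths2_of mem' vs' es' = npaths2_of mem vs es.
Proof.
rewrite /npaths2_of /sum_ve2v (perm_big _ perm_vs) big_map; apply: eq_big_seq => u u_vs.
rewrite (perm_big _ perm_es) big_map; apply: eq_big_seq => e1 e1_es.
rewrite (perm_big _ perm_vs) big_map; apply: eq_big_seq => v v_vs.
rewrite (perm_big _ perm_es) big_map; apply: eq_big_seq => e2 e2_es.
rewrite (perm_big _ perm_vs) big_map; apply: eq_big_seq => w w_vs.
by rewrite /is_path2 !mem_transport // (uniq3_map_in phi_inj) // (inj_in_eq psi_inj).
Qed.

Lemma ndigons_of_transport : ndigons_of mem' vs' es' = ndigons_of mem vs es.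
Proof.
rewrite /ndigons_of /sum_ve2 (perm_big _ perm_vs) big_map; apply: eq_big_seq => u u_vs.
rewrite (perm_big _ perm_es) big_map; apply: eq_big_seq => e1 e1_es.
rewrite (perm_big _ perm_vs) big_map; apply: eq_big_seq => v v_vs.
rewrite (perm_big _ perm_es) big_map; apply: eq_big_seq => e2 e2_es.
by rewrite /is_digon !mem_transport // (inj_in_eq phi_inj).
Qed.

End Transport.

(** * The lift of an incidence relation *)

Definition tri_growth (k : nat) : nat := (k - 1) ^ 3 + 3 * (k - 1).
Definition path_growth (k : nat) : nat := k ^ 2 + 1.
Definition digon_growth (k : nat) : nat := (k - 1) ^ 2 + 2.

Section Lift.
Variables (V E : eqType) (k : nat) (vs : seq V) (es : seq E) (members : E -> seq V).
Hypotheses (vs_uniq : uniq vs) (es_uniq : uniq es).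
Hypothesis members_uniq_size : {in es, forall f, uniq (members f) /\ size (members f) = k}.

Definition base_mem (x : V) (f : E) : bool := x \in members f.

Definition clone_bits : seq bool := [:: false; true].
Definition edge_opts (f : E) : seq (option V) := None :: map Some (members f).

(* A lifted vertex (x, true) is the clone x' of x; a lifted edge (f, None) is f
   itself and (f, Some z) is the clone edge f - z + z'. *)
Definition lift_verts : seq (V * bool) := [seq (x, b) | x <- vs, b <- clone_bits].
Definition lift_edges : seq (E * option V) := [seq (f, o) | f <- es, o <- edge_opts f].
Definition lift_mem (u : V * bool) (e : E * option V) : bool :=
  if u.2 then e.2 == Some u.1 else (u.1 \in members e.1) && (e.2 != Some u.1).

Lemma mem_lift_verts x b : ((x, b) \in lift_verts) = (x \in vs).
Proof.
apply/allpairsPdep/idP => [[y [c [y_vs _ [-> _]]]] //|x_vs].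
by exists x, b; split => //; case: b.
Qed.

Lemma mem_edge_opts f z : (Some z \in edge_opts f) = (z \in members f).
Proof. by rewrite inE /= mem_map //; apply: Some_inj. Qed.

Lemma mem_lift_edges f o : ((f, o) \in lift_edges) = (f \in es) && (o \in edge_opts f).
Proof. by apply/allpairsPdep/andP => [[g [p [g_es p_opts [-> ->]]]] //|[]]; exists f, o. Qed.

Lemma lift_verts_uniq : uniq lift_verts.
Proof. by rewrite allpairs_uniq // => -[x b] [y c]. Qed.

Lemma lift_edges_uniq : uniq lift_edges.
Proof.
rewrite allpairs_uniq_dep // => [f f_es|[f o] [g p] _ _ /= [-> ->] //].
have [uniq_f _] := members_uniq_size f_es.
by rewrite /= map_inj_uniq // ?uniq_f ?andbT; [apply/mapP => -[] | move=> a b []].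
Qed.

Lemma lift_mem_base x b f o :
  o \in edge_opts f -> lift_mem (x, b) (f, o) -> base_mem x f.
Proof.
rewrite /lift_mem /=; case: b => [o_opts /eqP o_x|_ /andP [] //].
by rewrite /base_mem -mem_edge_opts -o_x.
Qed.

Lemma lift_mem_neq x b y c e :
  lift_mem (x, b) e -> lift_mem (y, c) e -> (x, b) != (y, c) -> x != y.
Proof.
case: e => f o; rewrite /lift_mem /= => xe ye; apply: contra => /eqP eq_xy.
move: xe ye; rewrite -eq_xy xpair_eqE eqxx /=.
case: b; case: c => //=; first by move=> /eqP -> /andP [_]; rewrite eqxx.
by move=> /andP [_ /negP o_x] o_x'; case: o_x.
Qed.

Definition pair_mult (b c : bool) : nat :=
  match b, c with false, false => k - 1 | true, true => 0 | _, _ => 1 end.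

Lemma size_members_gt1 f x y :
  f \in es -> x != y -> base_mem x f -> base_mem y f -> 1 < k.
Proof.
move=> f_es neq_xy x_f y_f; have [_ <-] := members_uniq_size f_es.
apply: (uniq_leq_size (s1 := [:: x; y])) => [|z]; first by rewrite /= inE neq_xy.
by rewrite !inE => /orP [] /eqP ->.
Qed.

Lemma count_pair_opts f x y b c :
  f \in es -> x != y -> base_mem x f -> base_mem y f ->
  \sum_(o <- edge_opts f) lift_mem (x, b) (f, o) * lift_mem (y, c) (f, o) =
  pair_mult b c.
Proof.
move=> f_es neq_xy x_f y_f; have [uniq_f size_f] := members_uniq_size f_es.
have count1 w : w \in members f -> count (pred1 w) (members f) = 1.
  by move=> w_f; rewrite count_uniq_mem ?w_f.
under eq_bigr => o _ do rewrite mulnb.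
rewrite big_cons big_map sum_nat_of_bool /lift_mem /=.
under eq_count => z do rewrite /= !(inj_eq Some_inj).
rewrite -!/(base_mem _ _) x_f y_f.
have count_xy : count (fun z => (z == x) && (z == y)) (members f) = 0.
  apply/eqP; rewrite -leqn0 leqNgt -has_count; apply/hasP => -[z _] /andP [/eqP -> ].
  exact/negP.
case: b; case: c => /=.
- by rewrite count_xy.
- rewrite -(count1 x x_f); apply: eq_count => z /=.
  by case: (z =P x) => // ->; rewrite neq_xy.
- rewrite -(count1 y y_f); apply: eq_count => z /=.
  by case: (z =P y) => [->|]; rewrite ?andbF // eq_sym neq_xy.
- have := count_predC (predU (pred1 x) (pred1 y)) (members f).
  have := count_predUI (pred1 x) (pred1 y) (members f).
  rewrite !count1 // [count (predI _ _) _]count_xy size_f.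
  rewrite (@eq_count _ (predC _) (fun z => (z != x) && (z != y))) => [|z]; last first.
    by rewrite /= negb_or.
  by rewrite addn0 => -> <-; rewrite addSn subn1.
Qed.

Lemma sum_lift_pair (F : V * bool -> E * option V -> nat) :
  \sum_(u <- lift_verts) \sum_(e <- lift_edges) F u e =
  \sum_(x <- vs) \sum_(f <- es) \sum_(b <- clone_bits) \sum_(o <- edge_opts f)
    F (x, b) (f, o).
Proof.
rewrite big_allpairs_dep; apply: eq_bigr => x _.
rewrite exchange_big big_allpairs_dep; apply: eq_bigr => f _.
exact: exchange_big.
Qed.

Lemma sum_lift_pair_vert (F : V * bool -> E * option V -> V * bool -> nat) :
  \sum_(u <- lift_verts) \sum_(e <- lift_edges) \sum_(w <- lift_verts) F u e w =
  \sum_(x <- vs) \sum_(f <- es) \sum_(z <- vs)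
    \sum_(b <- clone_bits) \sum_(o <- edge_opts f) \sum_(c <- clone_bits)
      F (x, b) (f, o) (z, c).
Proof.
rewrite sum_lift_pair; apply: eq_bigr => x _; apply: eq_bigr => f _.
under eq_bigr => b _ do under eq_bigr => o _ do rewrite big_allpairs_dep.
exact: exchange_big21.
Qed.

Lemma sum_lift_pair2 (F : V * bool -> E * option V -> V * bool -> E * option V -> nat) :
  \sum_(u <- lift_verts) \sum_(e <- lift_edges) \sum_(w <- lift_verts)
    \sum_(e' <- lift_edges) F u e w e' =
  \sum_(x <- vs) \sum_(f <- es) \sum_(z <- vs) \sum_(f' <- es)
    \sum_(b <- clone_bits) \sum_(o <- edge_opts f)
    \sum_(c <- clone_bits) \sum_(o' <- edge_opts f')
      F (x, b) (f, o) (z, c) (f', o').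
Proof.
rewrite sum_lift_pair; apply: eq_bigr => x _; apply: eq_bigr => f _.
under eq_bigr => b _ do under eq_bigr => o _ do rewrite sum_lift_pair.
exact: exchange_big22.
Qed.

Definition tri_fiber x f1 y f2 z f3 : nat :=
  \sum_(b1 <- clone_bits) \sum_(o1 <- edge_opts f1)
  \sum_(b2 <- clone_bits) \sum_(o2 <- edge_opts f2)
  \sum_(b3 <- clone_bits) \sum_(o3 <- edge_opts f3)
    is_tri lift_mem (x, b1) (f1, o1) (y, b2) (f2, o2) (z, b3) (f3, o3).

Definition path2_fiber x f1 y f2 z : nat :=
  \sum_(b1 <- clone_bits) \sum_(o1 <- edge_opts f1)
  \sum_(b2 <- clone_bits) \sum_(o2 <- edge_opts f2) \sum_(b3 <- clone_bits)
    is_path2 lift_mem (x, b1) (f1, o1) (y, b2) (f2, o2) (z, b3).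

Definition digon_fiber x f1 y f2 : nat :=
  \sum_(b1 <- clone_bits) \sum_(o1 <- edge_opts f1)
  \sum_(b2 <- clone_bits) \sum_(o2 <- edge_opts f2)
    is_digon lift_mem (x, b1) (f1, o1) (y, b2) (f2, o2).

Lemma ntri_of_lift : ntri_of lift_mem lift_verts lift_edges = sum_ve3 vs es tri_fiber.
Proof.
rewrite /ntri_of /sum_ve3 sum_lift_pair; apply: eq_bigr => x _; apply: eq_bigr => f1 _.
under eq_bigr => b1 _ do under eq_bigr => o1 _ do rewrite sum_lift_pair2.
rewrite exchange_big22; apply: eq_bigr => y _; apply: eq_bigr => f2 _.
exact: exchange_big22.
Qed.

Lemma npaths2_of_lift :
  npaths2_of lift_mem lift_verts lift_edges = sum_ve2v vs es path2_fiber.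
Proof.
rewrite /npaths2_of /sum_ve2v sum_lift_pair; apply: eq_bigr => x _; apply: eq_bigr => f1 _.
under eq_bigr => b1 _ do under eq_bigr => o1 _ do rewrite sum_lift_pair_vert.
rewrite exchange_big22; apply: eq_bigr => y _; apply: eq_bigr => f2 _.
exact: exchange_big21.
Qed.

Lemma ndigons_of_lift :
  ndigons_of lift_mem lift_verts lift_edges = sum_ve2 vs es digon_fiber.
Proof.
rewrite /ndigons_of /sum_ve2 sum_lift_pair; apply: eq_bigr => x _; apply: eq_bigr => f1 _.
under eq_bigr => b1 _ do under eq_bigr => o1 _ do rewrite sum_lift_pair.
exact: exchange_big22.
Qed.

Lemma tri_fiber_tri x f1 y f2 z f3 :
  f1 \in es -> f2 \in es -> f3 \in es -> is_tri base_mem x f1 y f2 z f3 ->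
  tri_fiber x f1 y f2 z f3 = tri_growth k.
Proof.
move=> f1_es f2_es f3_es /and5P [uniq_xyz uniq_f /andP [x1 y1] /andP [y2 z2] /andP [z3 x3]].
move: uniq_xyz uniq_f; rewrite !uniq3P.
move=> /and3P [neq_xy neq_xz neq_yz] /and3P [neq12 neq13 neq23].
rewrite /tri_fiber.
under eq_bigr => b1 _ do under eq_bigr => o1 _ do under eq_bigr => b2 _ do
  under eq_bigr => o2 _ do under eq_bigr => b3 _ do under eq_bigr => o3 _ do
  rewrite /is_tri !uniq3P !xpair_eqE (negbTE neq_xy) (negbTE neq_xz) (negbTE neq_yz)
    (negbTE neq12) (negbTE neq13) (negbTE neq23) /= -!mulnb mulnA.
have neq_zx : z != x by rewrite eq_sym.
have count1 b c := count_pair_opts b c f1_es neq_xy x1 y1.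
have count2 b c := count_pair_opts b c f2_es neq_yz y2 z2.
have count3 b c := count_pair_opts b c f3_es neq_zx z3 x3.
rewrite sum_mul_cycle3.
under eq_bigr => b1 _ do under eq_bigr => b2 _ do under eq_bigr => b3 _ do
  rewrite count1 count2 count3.
by rewrite /clone_bits !big_cons !big_nil /= /tri_growth; ring.
Qed.

Lemma path2_fiber_path2 x f1 y f2 z :
  f1 \in es -> f2 \in es -> is_path2 base_mem x f1 y f2 z ->
  path2_fiber x f1 y f2 z = path_growth k.
Proof.
move=> f1_es f2_es /and4P [uniq_xyz neq12 /andP [x1 y1] /andP [y2 z2]].
move: uniq_xyz; rewrite uniq3P => /and3P [neq_xy neq_xz neq_yz].
have k_gt1 := size_members_gt1 f1_es neq_xy x1 y1.
rewrite /path2_fiber.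
under eq_bigr => b1 _ do under eq_bigr => o1 _ do under eq_bigr => b2 _ do
  under eq_bigr => o2 _ do under eq_bigr => b3 _ do
  rewrite /is_path2 uniq3P !xpair_eqE (negbTE neq_xy) (negbTE neq_xz) (negbTE neq_yz)
    (negbTE neq12) /= -!mulnb.
have count1 b c := count_pair_opts b c f1_es neq_xy x1 y1.
have count2 b c := count_pair_opts b c f2_es neq_yz y2 z2.
rewrite sum_mul_chain2.
under eq_bigr => b1 _ do under eq_bigr => b2 _ do under eq_bigr => b3 _ do
  rewrite count1 count2.
rewrite /clone_bits !big_cons !big_nil /= /path_growth.
set K := k - 1; have -> : k = K + 1 by rewrite subnK // ltnW.
by ring.
Qed.

Lemma digon_fiber_digon x f1 y f2 :
  f1 \in es -> f2 \in es -> is_digon base_mem x f1 y f2 ->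
  digon_fiber x f1 y f2 = digon_growth k.
Proof.
move=> f1_es f2_es /and3P [neq_xy /andP [x1 y1] /andP [x2 y2]].
rewrite /digon_fiber.
under eq_bigr => b1 _ do under eq_bigr => o1 _ do under eq_bigr => b2 _ do
  under eq_bigr => o2 _ do rewrite /is_digon !xpair_eqE (negbTE neq_xy) /= -!mulnb.
have count1 b c := count_pair_opts b c f1_es neq_xy x1 y1.
have count2 b c := count_pair_opts b c f2_es neq_xy x2 y2.
rewrite sum_mul_pair.
under eq_bigr => b1 _ do under eq_bigr => b2 _ do rewrite count1 count2.
by rewrite /clone_bits !big_cons !big_nil /= /digon_growth; ring.
Qed.

Lemma size_edge_opts f : f \in es -> size (edge_opts f) = k.+1.
Proof. by move=> /members_uniq_size [_ size_f]; rewrite /= size_map size_f. Qed.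

Definition weak_tri x f1 y f2 z f3 : bool :=
  [&& uniq [:: x; y; z], base_mem x f1 && base_mem y f1,
      base_mem y f2 && base_mem z f2 & base_mem z f3 && base_mem x f3].

Definition weak_path2 x f1 y f2 z : bool :=
  [&& x != y, y != z, base_mem x f1 && base_mem y f1 & base_mem y f2 && base_mem z f2].

Lemma weak_tri_of_lift x b1 f1 o1 y b2 f2 o2 z b3 f3 o3 :
  o1 \in edge_opts f1 -> o2 \in edge_opts f2 -> o3 \in edge_opts f3 ->
  is_tri lift_mem (x, b1) (f1, o1) (y, b2) (f2, o2) (z, b3) (f3, o3) ->
  weak_tri x f1 y f2 z f3.
Proof.
move=> o1_f1 o2_f2 o3_f3 /and5P [uniq_xyz _ /andP [x1 y1] /andP [y2 z2] /andP [z3 x3]].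
move: uniq_xyz; rewrite uniq3P => /and3P [neq_xy neq_xz neq_yz].
rewrite /weak_tri uniq3P (lift_mem_neq x1 y1 neq_xy) (lift_mem_neq x3 z3 neq_xz).
rewrite (lift_mem_neq y2 z2 neq_yz) (lift_mem_base o1_f1 x1) (lift_mem_base o1_f1 y1).
rewrite (lift_mem_base o2_f2 y2) (lift_mem_base o2_f2 z2).
by rewrite (lift_mem_base o3_f3 z3) (lift_mem_base o3_f3 x3).
Qed.

Lemma weak_path2_of_lift x b1 f1 o1 y b2 f2 o2 z b3 :
  o1 \in edge_opts f1 -> o2 \in edge_opts f2 ->
  is_path2 lift_mem (x, b1) (f1, o1) (y, b2) (f2, o2) (z, b3) ->
  weak_path2 x f1 y f2 z.
Proof.
move=> o1_f1 o2_f2 /and4P [uniq_xyz _ /andP [x1 y1] /andP [y2 z2]].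
move: uniq_xyz; rewrite uniq3P => /and3P [neq_xy _ neq_yz].
rewrite /weak_path2 (lift_mem_neq x1 y1 neq_xy) (lift_mem_neq y2 z2 neq_yz).
rewrite (lift_mem_base o1_f1 x1) (lift_mem_base o1_f1 y1).
by rewrite (lift_mem_base o2_f2 y2) (lift_mem_base o2_f2 z2).
Qed.

Lemma tri_fiber_le_weak x f1 y f2 z f3 :
  f1 \in es -> f2 \in es -> f3 \in es ->
  tri_fiber x f1 y f2 z f3 <= (2 * k.+1) ^ 3 * weak_tri x f1 y f2 z f3.
Proof.
move=> f1_es f2_es f3_es.
apply: leq_trans (_ : _ <= \sum_(b1 <- clone_bits) \sum_(o1 <- edge_opts f1)
  \sum_(b2 <- clone_bits) \sum_(o2 <- edge_opts f2)
  \sum_(b3 <- clone_bits) \sum_(o3 <- edge_opts f3) weak_tri x f1 y f2 z f3) _.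
  apply: leq_sum => b1 _; apply: leq_sum_seq => o1 o1_f1.
  apply: leq_sum => b2 _; apply: leq_sum_seq => o2 o2_f2.
  apply: leq_sum => b3 _; apply: leq_sum_seq => o3 o3_f3.
  by apply: leq_bool_impl; exact: weak_tri_of_lift.
rewrite !sum_nat_const_seq !size_edge_opts //.
by rewrite /=; apply: eq_leq; ring.
Qed.

Definition tri_degenerate x f1 y f2 z f3 : nat :=
  (f3 == f2) * (base_mem z f2 * is_digon base_mem x f1 y f2).

Lemma weak_tri_le_degenerate x f1 y f2 z f3 :
  ~~ is_tri base_mem x f1 y f2 z f3 -> weak_tri x f1 y f2 z f3 <=
  tri_degenerate x f1 y f2 z f3 + tri_degenerate y f2 z f3 x f1 +
  tri_degenerate z f3 x f1 y f2.
Proof.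
case weak: (weak_tri _ _ _ _ _ _) => //.
move/and4P: weak => [uniq_xyz /andP [x1 y1] /andP [y2 z2] /andP [z3 x3]].
rewrite /is_tri uniq_xyz x1 y1 y2 z2 z3 x3 !andbT uniq3P.
move: uniq_xyz; rewrite uniq3P => /and3P [neq_xy neq_xz neq_yz].
rewrite /tri_degenerate /is_digon.
case: (eqVneq f3 f2) => [eq32 _|_]; first by subst f3; rewrite z2 neq_xy x1 y1 x3 y2.
case: (eqVneq f1 f3) => [eq13 _|_]; first by subst f3; rewrite x3 neq_yz y2 z2 y1 z3.
case: (eqVneq f2 f1) => [eq21 _|//]; subst f2.
by rewrite y1 [z == x]eq_sym neq_xz z3 x3 x1 z2.
Qed.

Lemma tri_fiber_le x f1 y f2 z f3 :
  f1 \in es -> f2 \in es -> f3 \in es ->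
  tri_fiber x f1 y f2 z f3 <= tri_growth k * is_tri base_mem x f1 y f2 z f3 +
    (2 * k.+1) ^ 3 * (tri_degenerate x f1 y f2 z f3 + tri_degenerate y f2 z f3 x f1 +
                      tri_degenerate z f3 x f1 y f2).
Proof.
move=> f1_es f2_es f3_es.
have [tri_xyz|not_tri] := boolP (is_tri base_mem x f1 y f2 z f3).
  by rewrite tri_fiber_tri // muln1 leq_addr.
rewrite muln0 add0n (leq_trans (tri_fiber_le_weak _ _ _ f1_es f2_es f3_es)) //.
by rewrite leq_mul2l weak_tri_le_degenerate ?orbT.
Qed.

Lemma sum_tri_degenerate : sum_ve3 vs es tri_degenerate <= k * ndigons_of base_mem vs es.
Proof.
rewrite /sum_ve3 /ndigons_of /sum_ve2 big_distrr; apply: leq_sum => x _.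
rewrite big_distrr; apply: leq_sum => f1 _; rewrite big_distrr; apply: leq_sum => y _.
rewrite big_distrr; apply: leq_sum_seq => f2 f2_es.
apply: leq_trans (_ : _ <= \sum_(z <- vs) base_mem z f2 * is_digon base_mem x f1 y f2) _.
  by apply: leq_sum => z _; apply: sum_eq_mul_le.
rewrite -big_distrl leq_mul2r; apply/orP; right.
by have [_ <-] := members_uniq_size f2_es; apply: sum_mem_le.
Qed.

Lemma ntri_lift_ge :
  tri_growth k * ntri_of base_mem vs es <= ntri_of lift_mem lift_verts lift_edges.
Proof.
rewrite ntri_of_lift /ntri_of -sum_ve3Ml.
apply: leq_sum_ve3 => x f1 y f2 z f3 f1_es f2_es f3_es.
have [tri_xyz|_] := boolP (is_tri base_mem x f1 y f2 z f3); last by rewrite muln0.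
by rewrite tri_fiber_tri // muln1.
Qed.

Lemma ntri_lift_le :
  ntri_of lift_mem lift_verts lift_edges <=
  tri_growth k * ntri_of base_mem vs es + 3 * k * (2 * k.+1) ^ 3 * ndigons_of base_mem vs es.
Proof.
rewrite ntri_of_lift.
apply: leq_trans (_ : _ <= sum_ve3 vs es (fun x f1 y f2 z f3 =>
  tri_growth k * is_tri base_mem x f1 y f2 z f3 +
  (2 * k.+1) ^ 3 * (tri_degenerate x f1 y f2 z f3 + tri_degenerate y f2 z f3 x f1 +
                    tri_degenerate z f3 x f1 y f2))) _.
  by apply: leq_sum_ve3 => *; apply: tri_fiber_le.
have rot1 : sum_ve3 vs es (fun x f1 y f2 z f3 => tri_degenerate y f2 z f3 x f1) =
            sum_ve3 vs es tri_degenerate by exact: sum_ve3_rot.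
have rot2 : sum_ve3 vs es (fun x f1 y f2 z f3 => tri_degenerate z f3 x f1 y f2) =
            sum_ve3 vs es tri_degenerate.
  by rewrite -rot1 -(sum_ve3_rot vs es (fun x f1 y f2 z f3 => tri_degenerate y f2 z f3 x f1)).
rewrite sum_ve3D !sum_ve3Ml !sum_ve3D rot1 rot2 leq_add2l.
have degenerate_le := sum_tri_degenerate.
apply: leq_trans (leq_mul (leqnn _)
  (leq_add (leq_add degenerate_le degenerate_le) degenerate_le)) _.
by apply: eq_leq; ring.
Qed.

Definition path2_degenerate x f1 y f2 z : nat :=
  (base_mem z f2 + (z == x)) * is_digon base_mem x f1 y f2.

Lemma path2_fiber_le_weak x f1 y f2 z :
  f1 \in es -> f2 \in es ->
  path2_fiber x f1 y f2 z <= 2 * (2 * k.+1) ^ 2 * weak_path2 x f1 y f2 z.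
Proof.
move=> f1_es f2_es.
apply: leq_trans (_ : _ <= \sum_(b1 <- clone_bits) \sum_(o1 <- edge_opts f1)
  \sum_(b2 <- clone_bits) \sum_(o2 <- edge_opts f2)
  \sum_(b3 <- clone_bits) weak_path2 x f1 y f2 z) _.
  apply: leq_sum => b1 _; apply: leq_sum_seq => o1 o1_f1.
  apply: leq_sum => b2 _; apply: leq_sum_seq => o2 o2_f2.
  by apply: leq_sum => b3 _; apply: leq_bool_impl; exact: weak_path2_of_lift.
rewrite !sum_nat_const_seq !size_edge_opts //.
by rewrite /=; apply: eq_leq; ring.
Qed.

Lemma weak_path2_le_degenerate x f1 y f2 z :
  ~~ is_path2 base_mem x f1 y f2 z -> weak_path2 x f1 y f2 z <= path2_degenerate x f1 y f2 z.
Proof.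
case weak: (weak_path2 _ _ _ _ _) => //.
move/and4P: weak => [neq_xy neq_yz /andP [x1 y1] /andP [y2 z2]].
rewrite /is_path2 uniq3P neq_xy neq_yz x1 y1 y2 z2 !andbT /path2_degenerate /is_digon.
case: (eqVneq z x) => [eq_zx _|_]; first by subst z; rewrite neq_xy x1 y1 z2 y2 addn1.
by case: (eqVneq f1 f2) => [eq12 _|//]; subst f2; rewrite neq_xy x1 y1 z2.
Qed.

Lemma path2_fiber_le x f1 y f2 z :
  f1 \in es -> f2 \in es ->
  path2_fiber x f1 y f2 z <= path_growth k * is_path2 base_mem x f1 y f2 z +
    2 * (2 * k.+1) ^ 2 * path2_degenerate x f1 y f2 z.
Proof.
move=> f1_es f2_es.
have [path_xyz|not_path] := boolP (is_path2 base_mem x f1 y f2 z).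
  by rewrite path2_fiber_path2 // muln1 leq_addr.
rewrite muln0 add0n (leq_trans (path2_fiber_le_weak _ _ _ f1_es f2_es)) //.
by rewrite leq_mul2l weak_path2_le_degenerate ?orbT.
Qed.

Lemma sum_path2_degenerate :
  sum_ve2v vs es path2_degenerate <= k.+1 * ndigons_of base_mem vs es.
Proof.
rewrite /sum_ve2v /ndigons_of /sum_ve2 big_distrr; apply: leq_sum => x _.
rewrite big_distrr; apply: leq_sum => f1 _; rewrite big_distrr; apply: leq_sum => y _.
rewrite big_distrr; apply: leq_sum_seq => f2 f2_es.
rewrite -big_distrl leq_mul2r big_split /=; apply/orP; right.
rewrite -addn1 leq_add //; first by have [_ <-] := members_uniq_size f2_es; apply: sum_mem_le.
by have := sum_eq_mul_le x 1 vs_uniq; under eq_bigr => z _ do rewrite muln1.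
Qed.

Lemma npaths2_lift_ge :
  path_growth k * npaths2_of base_mem vs es <= npaths2_of lift_mem lift_verts lift_edges.
Proof.
rewrite npaths2_of_lift /npaths2_of -sum_ve2vMl.
apply: leq_sum_ve2v => x f1 y f2 z f1_es f2_es.
have [path_xyz|_] := boolP (is_path2 base_mem x f1 y f2 z); last by rewrite muln0.
by rewrite path2_fiber_path2 // muln1.
Qed.

Lemma npaths2_lift_le :
  npaths2_of lift_mem lift_verts lift_edges <=
  path_growth k * npaths2_of base_mem vs es +
  k.+1 * (2 * (2 * k.+1) ^ 2) * ndigons_of base_mem vs es.
Proof.
rewrite npaths2_of_lift /npaths2_of.
apply: leq_trans (_ : _ <= sum_ve2v vs es (fun x f1 y f2 z =>
  path_growth k * is_path2 base_mem x f1 y f2 z +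
  2 * (2 * k.+1) ^ 2 * path2_degenerate x f1 y f2 z)) _.
  by apply: leq_sum_ve2v => *; apply: path2_fiber_le.
rewrite sum_ve2vD !sum_ve2vMl leq_add2l.
apply: leq_trans (leq_mul (leqnn _) sum_path2_degenerate) _.
by apply: eq_leq; ring.
Qed.

Lemma is_digon_of_lift x b1 f1 o1 y b2 f2 o2 :
  o1 \in edge_opts f1 -> o2 \in edge_opts f2 ->
  is_digon lift_mem (x, b1) (f1, o1) (y, b2) (f2, o2) -> is_digon base_mem x f1 y f2.
Proof.
move=> o1_f1 o2_f2 /and3P [neq_xy /andP [x1 y1] /andP [x2 y2]].
rewrite /is_digon (lift_mem_neq x1 y1 neq_xy) (lift_mem_base o1_f1 x1).
by rewrite (lift_mem_base o1_f1 y1) (lift_mem_base o2_f2 x2) (lift_mem_base o2_f2 y2).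
Qed.

Lemma digon_fiber_le_base x f1 y f2 :
  f1 \in es -> f2 \in es ->
  digon_fiber x f1 y f2 <= (2 * k.+1) ^ 2 * is_digon base_mem x f1 y f2.
Proof.
move=> f1_es f2_es.
apply: leq_trans (_ : _ <= \sum_(b1 <- clone_bits) \sum_(o1 <- edge_opts f1)
  \sum_(b2 <- clone_bits) \sum_(o2 <- edge_opts f2) is_digon base_mem x f1 y f2) _.
  apply: leq_sum => b1 _; apply: leq_sum_seq => o1 o1_f1.
  apply: leq_sum => b2 _; apply: leq_sum_seq => o2 o2_f2.
  by apply: leq_bool_impl; exact: is_digon_of_lift.
rewrite !sum_nat_const_seq !size_edge_opts //.
by rewrite /=; apply: eq_leq; ring.
Qed.

Lemma ndigons_lift_le :
  ndigons_of lift_mem lift_verts lift_edges <= digon_growth k * ndigons_of base_mem vs es.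
Proof.
rewrite ndigons_of_lift /ndigons_of -sum_ve2Ml.
apply: leq_sum_ve2 => x f1 y f2 f1_es f2_es.
have [digon_xy|not_digon] := boolP (is_digon base_mem x f1 y f2).
  by rewrite digon_fiber_digon // muln1.
by have := digon_fiber_le_base x y f1_es f2_es; rewrite (negbTE not_digon) !muln0.
Qed.

Hypothesis members_sub : {in es, forall f, {subset members f <= vs}}.

Lemma npaths2_lift_gt0 f :
  f \in es -> 1 < k -> 0 < npaths2_of lift_mem lift_verts lift_edges.
Proof.
move=> f_es k_gt1; have [uniq_f size_f] := members_uniq_size f_es.
case ef: (members f) uniq_f size_f => [|x [|y s]] uniq_f size_f;
  try by rewrite -size_f in k_gt1.
have x_f : base_mem x f by rewrite /base_mem ef inE eqxx.
have y_f : base_mem y f by rewrite /base_mem ef !inE eqxx orbT.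
have neq_xy : x != y by move: uniq_f => /andP []; rewrite inE negb_or => /andP [].
apply: (npaths2_of_gt0 (u := (x, false)) (e1 := (f, None)) (v := (y, false))
                       (e2 := (f, Some x)) (w := (x, true))).
- by rewrite mem_lift_verts (members_sub f_es x_f).
- by rewrite mem_lift_edges f_es inE eqxx.
- by rewrite mem_lift_verts (members_sub f_es y_f).
- by rewrite mem_lift_edges f_es mem_edge_opts.
- by rewrite mem_lift_verts (members_sub f_es x_f).
rewrite /is_path2 uniq3P !xpair_eqE /lift_mem /= -!/(base_mem _ _) x_f y_f.
by rewrite !(inj_eq Some_inj) (negbTE neq_xy) !eqxx /= !andbF.
Qed.

Lemma ntri_lift_gt0 f :
  f \in es -> 2 < k -> 0 < ntri_of lift_mem lift_verts lift_edges.
Proof.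
move=> f_es k_gt2; have [uniq_f size_f] := members_uniq_size f_es.
case ef: (members f) uniq_f size_f => [|x [|y [|z s]]] uniq_f size_f;
  try by rewrite -size_f in k_gt2.
have x_f : base_mem x f by rewrite /base_mem ef inE eqxx.
have y_f : base_mem y f by rewrite /base_mem ef !inE eqxx orbT.
have z_f : base_mem z f by rewrite /base_mem ef !inE eqxx !orbT.
have [neq_xy neq_xz neq_yz] : [/\ x != y, x != z & y != z].
  by move: uniq_f; rewrite /= !inE !negb_or => /and3P [/and3P [-> -> _] /andP [-> _] _].
apply: (ntri_of_gt0 (u := (x, false)) (e1 := (f, None)) (v := (y, false))
                    (e2 := (f, Some x)) (w := (z, false)) (e3 := (f, Some y))).
- by rewrite mem_lift_verts (members_sub f_es x_f).
- by rewrite mem_lift_edges f_es inE eqxx.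
- by rewrite mem_lift_verts (members_sub f_es y_f).
- by rewrite mem_lift_edges f_es mem_edge_opts.
- by rewrite mem_lift_verts (members_sub f_es z_f).
- by rewrite mem_lift_edges f_es mem_edge_opts.
rewrite /is_tri !uniq3P !xpair_eqE /lift_mem /= -!/(base_mem _ _) x_f y_f z_f.
by rewrite !(inj_eq Some_inj) (negbTE neq_xy) (negbTE neq_xz) (negbTE neq_yz) !eqxx /= eq_sym.
Qed.

End Lift.

(** * The ILTH step as a lift *)

Definition fmembers (f : {fset nat}) : seq nat := enum_fset f.

Section ILTHStep.
Variables (k : nat) (H : hgraph).
Hypothesis H_uniform : uniform k H.

Local Notation n := (nv H).
Local Notation lverts := (lift_verts (verts H)).
Local Notation ledges := (lift_edges (hedges H) fmembers).

Definition clone_vert (u : nat * bool) : nat := if u.2 then u.1 + n else u.1.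
Definition clone_edge (e : {fset nat} * option nat) : {fset nat} :=
  if e.2 is Some z then ((e.1 `\ z) `|` [fset (z + n)%N])%fset else e.1.

Lemma edge_vert_lt x f : f \in edges H -> x \in f -> x < n.
Proof. by move=> /H_uniform [_ f_lt] /f_lt. Qed.

Lemma clone_notin_edge z f : f \in edges H -> (z + n \in f) = false.
Proof. by move=> f_H; apply/negP => /(edge_vert_lt f_H); rewrite ltnNge leq_addl. Qed.

Lemma mem_verts x : (x \in verts H) = (x < n).
Proof. by rewrite mem_iota. Qed.

Lemma hedges_uniq_size : {in hedges H, forall f, uniq (fmembers f) /\ size (fmembers f) = k}.
Proof. by move=> f /H_uniform [size_f _]; split; [exact: fset_uniq|]. Qed.

Lemma hedges_sub : {in hedges H, forall f, {subset fmembers f <= verts H}}.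
Proof. by move=> f f_H x x_f; rewrite mem_verts (edge_vert_lt f_H). Qed.

Lemma clone_vert_inj : {in lverts &, injective clone_vert}.
Proof.
move=> [x b] [y c]; rewrite !mem_lift_verts !mem_verts /clone_vert /= => x_lt y_lt.
case: b; case: c => /=.
- by move/eqP; rewrite eqn_add2r => /eqP ->.
- by move=> eq_xy; move: y_lt; rewrite -eq_xy ltnNge leq_addl.
- by move=> eq_xy; move: x_lt; rewrite eq_xy ltnNge leq_addl.
- by move ->.
Qed.

Lemma clone_edge_inj : {in ledges &, injective clone_edge}.
Proof.
move=> [f o] [g p]; rewrite !mem_lift_edges => /andP [f_H o_f] /andP [g_H p_g].
rewrite /clone_edge /=; case: o o_f => [z|] o_f; case: p p_g => [w|] p_g eq_fg.
- have eq_zw : z = w.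
    have := congr1 (fun A => z + n \in A) eq_fg => /=.
    rewrite !in_fsetU !in_fsetD1 !in_fset1 eqxx orbT (clone_notin_edge _ g_H) andbF /=.
    by move/esym; rewrite eqn_add2r => /eqP.
  subst w; congr (_, _); apply/fsetP => y.
  have := congr1 (fun A => y \in A) eq_fg => /=.
  have z_f : z \in f by move: o_f; rewrite mem_edge_opts.
  have z_g : z \in g by move: p_g; rewrite mem_edge_opts.
  rewrite !in_fsetU !in_fsetD1 !in_fset1.
  case: (y =P z) => [->|_] /=; first by rewrite z_f z_g.
  case: (y =P z + n) => [->|_]; last by rewrite !orbF.
  by rewrite (clone_notin_edge _ f_H) (clone_notin_edge _ g_H).
- have := congr1 (fun A => z + n \in A) eq_fg => /=.
  by rewrite !in_fsetU !in_fset1 eqxx orbT (clone_notin_edge _ g_H).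
- have := congr1 (fun A => w + n \in A) eq_fg => /=.
  by rewrite !in_fsetU !in_fset1 eqxx orbT (clone_notin_edge _ f_H).
- by rewrite eq_fg.
Qed.

Lemma mem_clone :
  {in lverts & ledges, forall u e, (clone_vert u \in clone_edge e) = lift_mem fmembers u e}.
Proof.
move=> [x b] [f o]; rewrite mem_lift_verts mem_verts mem_lift_edges => x_lt /andP [f_H _].
rewrite /clone_vert /clone_edge /lift_mem /=.
case: b; case: o => [z|] /=.
- rewrite in_fsetU in_fsetD1 in_fset1 (clone_notin_edge _ f_H) andbF /= eqn_add2r.
  by rewrite (inj_eq Some_inj) eq_sym.
- exact: clone_notin_edge.
- rewrite in_fsetU in_fsetD1 in_fset1 (inj_eq Some_inj).
  have -> : (x == z + n) = false.
    by apply/negP => /eqP eq_x; move: x_lt; rewrite eq_x ltnNge leq_addl.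
  by rewrite orbF andbC eq_sym.
- by rewrite andbT.
Qed.

Lemma perm_verts_step : perm_eq (verts (ilth_step H)) (map clone_vert lverts).
Proof.
apply: uniq_perm; first exact: iota_uniq.
  by rewrite map_inj_in_uniq ?lift_verts_uniq ?iota_uniq //; exact: clone_vert_inj.
move=> y; rewrite mem_iota add0n; apply/idP/mapP => [y_lt|[[x b] x_lifted ->]].
  have [y_n|n_y] := ltnP y n.
    by exists (y, false); rewrite ?mem_lift_verts ?mem_verts.
  exists (y - n, true); rewrite ?mem_lift_verts ?mem_verts /clone_vert /= ?subnK //.
  by rewrite ltn_subLR.
move: x_lifted; rewrite mem_lift_verts mem_verts /clone_vert /=; case: b => /= x_lt.
  by rewrite ltn_add2r.
exact: leq_trans x_lt (leq_addr _ _).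
Qed.

Lemma perm_edges_step : perm_eq (hedges (ilth_step H)) (map clone_edge ledges).
Proof.
apply: uniq_perm; first exact: fset_uniq.
  rewrite map_inj_in_uniq; last exact: clone_edge_inj.
  by apply: lift_edges_uniq; [exact: fset_uniq | exact: hedges_uniq_size].
move=> e; rewrite /hedges /ilth_step.
change ((e \in edges H `|` [fset e0 in clone_edges H])%fset = (e \in map clone_edge ledges)).
rewrite in_fsetU inE; apply/orP/mapP => [[e_H|]|[[f o] fo_lifted ->]].
- by exists (e, None) => //; rewrite mem_lift_edges e_H inE.
- rewrite /clone_edges => /allpairsPdep [f [z [f_H z_f ->]]].
  by exists (f, Some z) => //; rewrite mem_lift_edges f_H mem_edge_opts.
- move: fo_lifted; rewrite mem_lift_edges => /andP [f_H]; rewrite /clone_edge /=.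
  case: o => [z|] /=; last by left.
  rewrite mem_edge_opts => z_f; right; rewrite /clone_edges; apply/allpairsPdep.
  by exists f, z.
Qed.

Lemma ntriangles_step :
  ntriangles (ilth_step H) = ntri_of (lift_mem fmembers) lverts ledges.
Proof.
rewrite ntrianglesE; apply: ntri_of_transport perm_verts_step perm_edges_step _ _ mem_clone.
  exact: clone_vert_inj.
exact: clone_edge_inj.
Qed.

Lemma npaths2_step :
  npaths2 (ilth_step H) = npaths2_of (lift_mem fmembers) lverts ledges.
Proof.
rewrite npaths2E; apply: npaths2_of_transport perm_verts_step perm_edges_step _ _ mem_clone.
  exact: clone_vert_inj.
exact: clone_edge_inj.
Qed.

Lemma ndigons_step : ndigons (ilth_step H) = ndigons_of (lift_mem fmembers) lverts ledges.
Proof.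
apply: ndigons_of_transport perm_verts_step perm_edges_step _ mem_clone.
exact: clone_vert_inj.
Qed.

Lemma uniform_step : uniform k (ilth_step H).
Proof.
move=> e; rewrite /ilth_step /= in_fsetU inE => /orP [e_H|].
  have [size_e e_lt] := H_uniform e_H.
  by split => // x x_e; apply: leq_trans (e_lt x x_e) (leq_addr _ _).
rewrite /clone_edges => /allpairsPdep [f [z [f_H z_f ->]]].
have [size_f f_lt] := H_uniform f_H.
split.
  rewrite fsetUC cardfsU1 in_fsetD1 (clone_notin_edge _ f_H) andbF /=.
  by have := cardfsD1 z f; rewrite z_f size_f /=; lia.
move=> x; rewrite in_fsetU in_fsetD1 in_fset1 => /orP [/andP [_ x_f]|/eqP ->].
  exact: leq_trans (f_lt x x_f) (leq_addr _ _).
by rewrite ltn_add2r; apply: f_lt.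
Qed.

Lemma ntriangles_step_ge : tri_growth k * ntriangles H <= ntriangles (ilth_step H).
Proof. by rewrite ntriangles_step ntrianglesE; apply: ntri_lift_ge hedges_uniq_size. Qed.

Lemma ntriangles_step_le :
  ntriangles (ilth_step H) <=
  tri_growth k * ntriangles H + 3 * k * (2 * k.+1) ^ 3 * ndigons H.
Proof.
rewrite ntriangles_step ntrianglesE.
by apply: ntri_lift_le hedges_uniq_size; [exact: iota_uniq | exact: fset_uniq].
Qed.

Lemma npaths2_step_ge : path_growth k * npaths2 H <= npaths2 (ilth_step H).
Proof. by rewrite npaths2_step npaths2E; apply: npaths2_lift_ge hedges_uniq_size. Qed.

Lemma npaths2_step_le :
  npaths2 (ilth_step H) <=
  path_growth k * npaths2 H + k.+1 * (2 * (2 * k.+1) ^ 2) * ndigons H.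
Proof.
rewrite npaths2_step npaths2E.
by apply: npaths2_lift_le hedges_uniq_size; exact: iota_uniq.
Qed.

Lemma ndigons_step_le : ndigons (ilth_step H) <= digon_growth k * ndigons H.
Proof. by rewrite ndigons_step; apply: ndigons_lift_le hedges_uniq_size. Qed.

Lemma npaths2_step_gt0 : 1 < k -> edges H != fset0 -> 0 < npaths2 (ilth_step H).
Proof.
move=> k_gt1 /fset0Pn [f f_H]; rewrite npaths2_step.
exact: (@npaths2_lift_gt0 _ _ k _ _ _ hedges_uniq_size hedges_sub f f_H k_gt1).
Qed.

Lemma ntriangles_step_gt0 : 2 < k -> edges H != fset0 -> 0 < ntriangles (ilth_step H).
Proof.
move=> k_gt2 /fset0Pn [f f_H]; rewrite ntriangles_step.
exact: (@ntri_lift_gt0 _ _ k _ _ _ hedges_uniq_size hedges_sub f f_H k_gt2).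
Qed.

End ILTHStep.

Lemma uniform_ilth k H0 t : uniform k H0 -> uniform k (ilth H0 t).
Proof.
by move=> H0_uniform; elim: t => [|t IHt] //; rewrite /ilth iterS; apply: uniform_step.
Qed.

(** * Geometric growth *)

Lemma geometric_lower (a : nat) (T : nat -> nat) :
  (forall t, a * T t <= T t.+1) -> forall t, a ^ t * T 0 <= T t.
Proof.
move=> T_ge; elim=> [|t IHt]; first by rewrite mul1n.
by rewrite expnS -mulnA (leq_trans _ (T_ge t)) // leq_mul2l IHt orbT.
Qed.

(* The potential (a - rho) T + C S grows by a factor at most a at each step. *)
Lemma geometric_upper (a rho C : nat) (T S : nat -> nat) :
  rho <= a -> (forall t, S t.+1 <= rho * S t) ->
  (forall t, T t.+1 <= a * T t + C * S t) ->
  forall t, (a - rho) * T t <= a ^ t * ((a - rho) * T 0 + C * S 0).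
Proof.
move=> rho_le S_le T_le.
suff potential_le t : (a - rho) * T t + C * S t <= a ^ t * ((a - rho) * T 0 + C * S 0).
  by move=> t; apply: leq_trans (leq_addr _ _) (potential_le t).
elim: t => [|t IHt]; first by rewrite mul1n.
apply: leq_trans (_ : _ <= a * ((a - rho) * T t + C * S t)) _; last first.
  by rewrite expnS -mulnA leq_mul2l IHt orbT.
have -> : a * ((a - rho) * T t + C * S t) =
          (a - rho) * (a * T t + C * S t) + C * (rho * S t).
  by move: (a - rho) (subnK rho_le) => d <-; ring.
by apply: leq_add; rewrite leq_mul2l ?T_le ?S_le orbT.
Qed.

Lemma ler_frac_nat (R : numFieldType) (n1 d1 n2 d2 : nat) :
  0 < d1 -> 0 < d2 -> n1 * d2 <= n2 * d1 ->
  (n1%:R / d1%:R <= n2%:R / d2%:R :> R)%R.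
Proof.
move=> d1_gt0 d2_gt0 le_n.
by rewrite ler_pdivrMr ?ltr0n // mulrAC ler_pdivlMr ?ltr0n // -!natrM ler_nat.
Qed.

Lemma ratio_geometric (R : numFieldType) (a b rho C1 C2 : nat) (T P S : nat -> nat) :
  rho < a -> rho < b -> (forall t, S t.+1 <= rho * S t) ->
  (forall t, a * T t <= T t.+1) -> (forall t, T t.+1 <= a * T t + C1 * S t) ->
  (forall t, b * P t <= P t.+1) -> (forall t, P t.+1 <= b * P t + C2 * S t) ->
  0 < T 1 -> 0 < P 1 ->
  exists c1 c2 : R, [/\ (0 < c1)%R, (0 < c2)%R & forall t, 0 < t ->
    (c1 * (a%:R / b%:R) ^+ t <= (T t)%:R / (P t)%:R <= c2 * (a%:R / b%:R) ^+ t)%R].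
Proof.
move=> rho_lt_a rho_lt_b S_le T_ge T_le P_ge P_le T1_gt0 P1_gt0.
have a_gt0 : 0 < a by apply: leq_ltn_trans rho_lt_a.
have b_gt0 : 0 < b by apply: leq_ltn_trans rho_lt_b.
have T_lower s : a ^ s * T 1 <= T s.+1.
  by apply: (geometric_lower (T := T \o succn)) => t; apply: T_ge.
have P_lower s : b ^ s * P 1 <= P s.+1.
  by apply: (geometric_lower (T := P \o succn)) => t; apply: P_ge.
pose PhiT := ((a - rho) * T 0 + C1 * S 0).+1.
pose PhiP := ((b - rho) * P 0 + C2 * S 0).+1.
have T_upper t : (a - rho) * T t <= a ^ t * PhiT.
  apply: leq_trans (geometric_upper (ltnW rho_lt_a) S_le T_le t) _.
  by rewrite leq_mul2l leqnSn orbT.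
have P_upper t : (b - rho) * P t <= b ^ t * PhiP.
  apply: leq_trans (geometric_upper (ltnW rho_lt_b) S_le P_le t) _.
  by rewrite leq_mul2l leqnSn orbT.
pose N1 := T 1 * (b - rho); pose D1 := a * PhiP.
pose N2 := PhiT * b; pose D2 := (a - rho) * P 1.
exists (N1%:R / D1%:R)%R, (N2%:R / D2%:R)%R.
split.
- by rewrite divr_gt0 // ltr0n muln_gt0 ?T1_gt0 ?subn_gt0 ?rho_lt_b ?a_gt0.
- by rewrite divr_gt0 // ltr0n muln_gt0 ?P1_gt0 ?subn_gt0 ?rho_lt_a ?b_gt0.
case=> [//|s] _; rewrite !expr_div_n !mulf_div -!natrX -!natrM.
have Ps_gt0 : 0 < P s.+1.
  by apply: leq_trans (P_lower s); rewrite muln_gt0 expn_gt0 b_gt0.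
apply/andP; split; apply: ler_frac_nat => //.
- by rewrite !muln_gt0 expn_gt0 a_gt0 b_gt0.
- have -> : N1 * a ^ s.+1 * P s.+1 = a * ((a ^ s * T 1) * ((b - rho) * P s.+1)).
    by rewrite /N1 expnS; ring.
  have -> : T s.+1 * (D1 * b ^ s.+1) = a * (T s.+1 * (b ^ s.+1 * PhiP)) by rewrite /D1; ring.
  by rewrite leq_mul2l leq_mul ?orbT.
- by rewrite !muln_gt0 expn_gt0 subn_gt0 rho_lt_a P1_gt0 b_gt0.
have -> : T s.+1 * (D2 * b ^ s.+1) = ((a - rho) * T s.+1) * (b * (b ^ s * P 1)).
  by rewrite /D2 expnS; ring.
have -> : N2 * a ^ s.+1 * P s.+1 = (a ^ s.+1 * PhiT) * (b * P s.+1) by rewrite /N2; ring.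
by rewrite leq_mul // leq_mul2l P_lower orbT.
Qed.

Lemma digon_lt_tri_growth k : 1 < k -> digon_growth k < tri_growth k.
Proof.
rewrite /digon_growth /tri_growth => k_gt1.
have K_gt0 : 0 < k - 1 by rewrite subn_gt0.
have : (k - 1) ^ 2 <= (k - 1) ^ 3 by rewrite leq_pexp2l.
lia.
Qed.

Lemma digon_lt_path_growth k : 1 < k -> digon_growth k < path_growth k.
Proof.
rewrite /digon_growth /path_growth; case: k => [|[|K]] // _.
rewrite subSS subn0; nia.
Qed.

Theorem theorem4p1 (k : nat) (H0 : hgraph) :
  (2 <= k)%N -> uniform k H0 -> edges H0 != fset0 ->
  (2 < k \/ 0 < ntriangles H0)%N ->
  let r : rat := ((((k - 1) ^ 3 + 3 * (k - 1))%N)%:R / ((k ^ 2 + 1)%N)%:R)%R in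
  exists (c1 c2 : rat) (T : nat), (0 < c1)%R /\ (0 < c2)%R /\
    forall t : nat, (T <= t)%N ->
      (c1 * r ^+ t <= HC1 (ilth H0 t) <= c2 * r ^+ t)%R.
Proof.
move=> k_gt1 H0_uniform H0_edges tri_or_k_gt2 r.
have step t : ilth H0 t.+1 = ilth_step (ilth H0 t) by rewrite /ilth iterS.
have Ht_uniform t : uniform k (ilth H0 t) := uniform_ilth H0_uniform.
pose T t := 6 * ntriangles (ilth H0 t).
pose P t := npaths2 (ilth H0 t).
pose S t := ndigons (ilth H0 t).
have S_le t : S t.+1 <= digon_growth k * S t.
  by rewrite /S step (ndigons_step_le (Ht_uniform t)).
have T_ge t : tri_growth k * T t <= T t.+1.
  by rewrite /T step mulnCA leq_mul2l (ntriangles_step_ge (Ht_uniform t)) orbT.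
have T_le t : T t.+1 <= tri_growth k * T t + 6 * (3 * k * (2 * k.+1) ^ 3) * S t.
  rewrite /T step mulnCA -mulnA -mulnDr leq_mul2l.
  by rewrite (ntriangles_step_le (Ht_uniform t)) orbT.
have P_ge t : path_growth k * P t <= P t.+1.
  by rewrite /P step (npaths2_step_ge (Ht_uniform t)).
have P_le t : P t.+1 <= path_growth k * P t + k.+1 * (2 * (2 * k.+1) ^ 2) * S t.
  by rewrite /P step (npaths2_step_le (Ht_uniform t)).
have T1_gt0 : 0 < T 1.
  rewrite /T muln_gt0 /=; case: tri_or_k_gt2 => [k_gt2|T0_gt0].
    exact: ntriangles_step_gt0 H0_uniform k_gt2 H0_edges.
  apply: leq_trans (ntriangles_step_ge H0_uniform); rewrite muln_gt0 T0_gt0 andbT.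
  exact: leq_ltn_trans (digon_lt_tri_growth k_gt1).
have P1_gt0 : 0 < P 1 := npaths2_step_gt0 H0_uniform k_gt1 H0_edges.
have [c1 [c2 [c1_gt0 c2_gt0 bounds]]] :=
  ratio_geometric rat (digon_lt_tri_growth k_gt1) (digon_lt_path_growth k_gt1)
    S_le T_ge T_le P_ge P_le T1_gt0 P1_gt0.
by exists c1, c2, 1%N; split => // t; apply: bounds.
Qed.
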